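(* For any signed graphs $(G,\sigma)$ and $(H,\tau)$, $$\chi_c\big((G,\sigma)\square'(H,\tau)\big)\le 2\max\{\chi_c(G),\chi_c(H)\},$$ where $\chi_c(G),\chi_c(H)$ are the circular chromatic numbers of the underlying unsigned graphs.
   Context: A signed graph $(G,\sigma)$ is a finite graph $G$ (multiple edges allowed, no loops) with a signature $\sigma:E(G)\to\{+1,-1\}$. For real $r\ge 2$, $C^r$ is the circle of circumference $r$, $d_{C^r}(x,y)=\min\{|x-y|,r-|x-y|\}$, $\overline{x}=x+r/2\pmod r$. A circular $r$-coloring of $(G,\sigma)$ is $f:V(G)\to C^r$ with $d_{C^r}(f(u),f(v))\ge1$ for each positive edge $uv$ and $d_{C^r}(f(u),\overline{f(v)})\ge1$ for each negative edge $uv$; $\chi_c(G,\sigma)$ is the infimum of such $r\ge2$. For an unsigned graph $G$, a circular $r$-coloring requires $d_{C^r}(f(u),f(v))\ge1$ for every edge, and $\chi_c(G)$ is the infimum of such $r$. Vertex signs: fix an orientation of $G$; for $u\in V(G)$ let $\sigma(u)=\prod_{e\in E_u}\sigma(e)^{\epsilon(e,u)}$, where $E_u$ is the set of edges incident to $u$ and $\epsilon(e,u)=1$ if $e$ is oriented away from $u$ and $-1$ otherwise; similarly $\tau(x)$ for $x\in V(H)$. The Type 2 Cartesian product $(G,\sigma)\square'(H,\tau)$ has vertex set $V(G)\times V(H)$, with $(u,x)(v,y)$ an edge iff either $u=v$ and $xy\in E(H)$, or $x=y$ and $uv\in E(G)$; the edge $(u,x)(v,x)$ has sign $\sigma(uv)\tau(x)$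 and the edge $(u,x)(u,y)$ has sign $\sigma(u)\tau(xy)$. *)

From HB Require Import structures.
From mathcomp Require Import all_boot all_order all_algebra.
From mathcomp Require Import classical_sets reals.
Set Implicit Arguments. Unset Strict Implicit. Unset Printing Implicit Defensive.
Import Order.TTheory GRing.Theory Num.Theory.
Local Open Scope ring_scope.
Local Open Scope classical_set_scope.

(* A (multi)graph: finite vertex type V, finite edge type E, each edge e
   has endpoints src e and tgt e (this also fixes an orientation of e,
   from src e to tgt e); loops are excluded by a separate hypothesis
   [forall e, src e != tgt e].  A signature is [sig : E -> bool], where
   [true] encodes the sign -1 and [false] the sign +1; product of signs
   is therefore [addb] (xor) and inversion is the identity. *)

(* distance on the circle C^r, points represented in [0, r) *)
Definition cdist {R : realType} (r x y : R) : R :=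
  Num.min `|x - y| (r - `|x - y|).

Definition antipode {R : realType} (r x : R) : R :=
  if x + r / 2 < r then x + r / 2 else x - r / 2.

Definition signed_circ_coloring {R : realType} {V E : finType}
  (src tgt : E -> V) (sig : E -> bool) (r : R) (f : V -> R) : Prop :=
  (forall v, 0 <= f v < r) /\
  (forall e, if sig e then 1 <= cdist r (f (src e)) (antipode r (f (tgt e)))
             else 1 <= cdist r (f (src e)) (f (tgt e))).

Definition circ_coloring {R : realType} {V E : finType}
  (src tgt : E -> V) (r : R) (f : V -> R) : Prop :=
  (forall v, 0 <= f v < r) /\
  (forall e, 1 <= cdist r (f (src e)) (f (tgt e))).

Definition chi_c_signed {R : realType} {V E : finType}
  (src tgt : E -> V) (sig : E -> bool) : R :=
  inf [set r : R | 2 <= r /\ exists f, signed_circ_coloring src tgt sig r f].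

Definition chi_c {R : realType} {V E : finType} (src tgt : E -> V) : R :=
  inf [set r : R | 2 <= r /\ exists f, circ_coloring src tgt r f].

(* vertex sign: product over incident edges e of sig(e)^{eps(e,u)};
   since sig(e) = +-1 is its own inverse, the exponent eps(e,u) = +-1
   is immaterial, so this is the xor of the signs of incident edges. *)
Definition vertex_sign {V E : finType} (src tgt : E -> V) (sig : E -> bool)
  (u : V) : bool :=
  \big[addb/false]_(e | (src e == u) || (tgt e == u)) sig e.

(* Type 2 Cartesian product: vertices V1 * V2; edges
   inl (e, x) : (src1 e, x) -- (tgt1 e, x), sign sig1 e * tau(x)
   inr (u, f) : (u, src2 f) -- (u, tgt2 f), sign sigma(u) * sig2 f *)
Section Prod.
Context {V1 E1 V2 E2 : finType} (src1 tgt1 : E1 -> V1) (sig1 : E1 -> bool)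
  (src2 tgt2 : E2 -> V2) (sig2 : E2 -> bool).

Definition prod_src (k : (E1 * V2 + V1 * E2)%type) : (V1 * V2)%type :=
  match k with inl (e, x) => (src1 e, x) | inr (u, f) => (u, src2 f) end.
Definition prod_tgt (k : (E1 * V2 + V1 * E2)%type) : (V1 * V2)%type :=
  match k with inl (e, x) => (tgt1 e, x) | inr (u, f) => (u, tgt2 f) end.
Definition prod_sig (k : (E1 * V2 + V1 * E2)%type) : bool :=
  match k with
  | inl (e, x) => addb (sig1 e) (vertex_sign src2 tgt2 sig2 x)
  | inr (u, f) => addb (vertex_sign src1 tgt1 sig1 u) (sig2 f)
  end.
End Prod.

From HB Require Import structures.
From mathcomp Require Import all_boot all_order all_algebra.
From mathcomp Require Import classical_sets reals.
From mathcomp Require Import lra.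
Import Order.TTheory GRing.Theory Num.Theory.
Local Open Scope ring_scope.
Local Open Scope classical_set_scope.

(* Given circular colourings f1 of G and f2 of H with circumferences at most
   s, colour (u, x) by f1 u + f2 x on the circle of circumference 2 s. Along
   an edge of the product one coordinate is fixed, so the two colours differ
   by an edge difference d of G or H, with 1 <= |d| <= s - 1. On that circle
   the two colours are then at distance |d| and each is at distance s - |d|
   from the antipode of the other; both are at least 1, so the colouring is
   valid whatever the signs of the product edges. *)

Section CircleDistance.
Context {R : realType}.
Implicit Types r p q : R.

Lemma normr_cases (x : R) : (0 <= x /\ `|x| = x) \/ (x < 0 /\ `|x| = - x).
Proof.
by case: (lerP 0 x) => h; [left; rewrite ger0_norm | right; rewrite ltr0_norm].
Qed.

Lemma cdist_ge1_norm r p q : 1 <= cdist r p q -> 1 <= `|p - q| <= r - 1.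
Proof. by rewrite /cdist le_min => /andP[-> ?]; lra. Qed.

Lemma cdist_norm r p q : `|p - q| <= r / 2 -> cdist r p q = `|p - q|.
Proof. by move=> h; apply/min_idPl; lra. Qed.

Lemma cdist_antipode r p q : 0 <= p < r -> 0 <= q < r ->
  cdist r p (antipode r q) = r / 2 - cdist r p q.
Proof.
move=> /andP[p0 pr] /andP[q0 qr]; rewrite /cdist /Order.min.
case: (normr_cases (p - q)) => -[h1 ->].
all: case: (normr_cases (p - antipode r q)) => -[h2 ->]; move: h2.
all: rewrite /antipode; case: (ltP (q + r / 2) r) => hq h2; do 2 case: ifP; lra.
Qed.

End CircleDistance.

Section Colorings.
Context {R : realType} {V E : finType} {src tgt : E -> V}.

Lemma circ_coloring_edge_norm {r : R} {f : V -> R} :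
  circ_coloring src tgt r f ->
  forall e, 1 <= `|f (src e) - f (tgt e)| <= r - 1.
Proof. by move=> [_ hf] e; apply: cdist_ge1_norm. Qed.

Lemma signed_circ_coloring_of_norm_band (sig : E -> bool) (r : R) f :
  (forall v, 0 <= f v < r) ->
  (forall e, 1 <= `|f (src e) - f (tgt e)| <= r / 2 - 1) ->
  signed_circ_coloring src tgt sig r f.
Proof.
move=> f_range f_band; split=> // e.
have /andP[lo hi] := f_band e.
have cdE : cdist r (f (src e)) (f (tgt e)) = `|f (src e) - f (tgt e)|.
  by apply: cdist_norm; lra.
case: (sig e); rewrite ?cdist_antipode ?cdE //; lra.
Qed.

Hypothesis noloop : forall e, src e != tgt e.

Lemma circ_coloring_enum_rank :
  circ_coloring src tgt (#|V|.+2)%:R (fun v => (enum_rank v : nat)%:R : R).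
Proof.
have rank_range (v : V) : 0 <= ((enum_rank v : nat)%:R : R) < #|V|%:R.
  by rewrite ler0n ltr_nat ltn_ord.
split=> [v | e].
  by rewrite /= ler0n ltr_nat (leq_trans (ltn_ord _) (leq_addl 2 _)).
set i := enum_rank (src e); set j := enum_rank (tgt e).
have i_neq_j : (i : nat) != j.
  by apply: contra (noloop e) => /eqP /ord_inj /enum_rank_inj ->.
have sep : (i%:R + 1 <= j%:R :> R) \/ (j%:R + 1 <= i%:R :> R).
  by case: ltngtP i_neq_j => // h _; [left | right]; rewrite natr1 ler_nat.
have := rank_range (src e); have := rank_range (tgt e).
rewrite -/i -/j => /andP[? ?] /andP[? ?].
rewrite /cdist le_min -addn2 natrD.
case: (normr_cases (i%:R - j%:R : R)) => -[h ->].
all: by apply/andP; case: sep; split; lra.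
Qed.

Lemma colorable_ge2 :
  [set r : R | 2 <= r /\ exists f, circ_coloring src tgt r f] !=set0.
Proof.
exists (#|V|.+2)%:R; split; first by rewrite ler_nat.
by eexists; apply: circ_coloring_enum_rank.
Qed.

End Colorings.

Lemma prod_signed_circ_coloring (R : realType)
    (V1 E1 : finType) (src1 tgt1 : E1 -> V1) (r1 : R) (f1 : V1 -> R)
    (V2 E2 : finType) (src2 tgt2 : E2 -> V2) (r2 : R) (f2 : V2 -> R)
    (sig : E1 * V2 + V1 * E2 -> bool) :
  circ_coloring src1 tgt1 r1 f1 -> circ_coloring src2 tgt2 r2 f2 ->
  signed_circ_coloring (prod_src src1 src2) (prod_tgt tgt1 tgt2) sig
    (2 * Num.max r1 r2) (fun uv => f1 uv.1 + f2 uv.2).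
Proof.
move=> col1 col2; set s := Num.max r1 r2.
have r1s : r1 <= s by rewrite le_max lexx.
have r2s : r2 <= s by rewrite le_max lexx orbT.
apply: signed_circ_coloring_of_norm_band => [[u x] | [[e x] | [u e]]] /=.
- by move: col1.1 col2.1 => /(_ u) /andP[? ?] /(_ x) /andP[? ?]; lra.
- rewrite opprD addrACA subrr addr0.
  by have /andP[? ?] := circ_coloring_edge_norm col1 e; lra.
- rewrite opprD addrACA subrr add0r.
  by have /andP[? ?] := circ_coloring_edge_norm col2 e; lra.
Qed.

Lemma inf_le_mulr_max {R : realType} {c : R} {S S1 S2 : set R} : 0 < c ->
  has_lbound S -> S1 !=set0 -> has_lbound S1 -> S2 !=set0 -> has_lbound S2 ->
  (forall r1 r2, S1 r1 -> S2 r2 -> S (c * Num.max r1 r2)) ->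
  inf S <= c * Num.max (inf S1) (inf S2).
Proof.
move=> c0 lbS neS1 lbS1 neS2 lbS2 hS; apply/ler_addgt0Pr => eps eps0.
have eps_c : 0 < eps / c by rewrite divr_gt0.
have [r1 S1r1 r1_lt] := inf_adherent eps_c (conj neS1 lbS1).
have [r2 S2r2 r2_lt] := inf_adherent eps_c (conj neS2 lbS2).
set m := Num.max (inf S1) (inf S2).
have [S1m S2m] : inf S1 <= m /\ inf S2 <= m by rewrite !le_max !lexx orbT.
have max_le : Num.max r1 r2 <= m + eps / c.
  by rewrite ge_max; apply/andP; split; lra.
apply: le_trans (ge_inf lbS (hS _ _ S1r1 S2r2)) _.
have -> : c * m + eps = c * (m + eps / c).
  by rewrite mulrDr mulrCA mulfV ?mulr1 // lt0r_neq0.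
by rewrite ler_pM2l.
Qed.

Theorem theorem3 (R : realType)
  (V1 E1 : finType) (src1 tgt1 : E1 -> V1) (sig1 : E1 -> bool)
  (noloop1 : forall e, src1 e != tgt1 e)
  (V2 E2 : finType) (src2 tgt2 : E2 -> V2) (sig2 : E2 -> bool)
  (noloop2 : forall e, src2 e != tgt2 e) :
  chi_c_signed (R := R)
    (prod_src src1 src2) (prod_tgt tgt1 tgt2)
    (prod_sig src1 tgt1 sig1 src2 tgt2 sig2)
  <= 2 * Num.max (chi_c (R := R) src1 tgt1) (chi_c (R := R) src2 tgt2).
Proof.
have lb2 (P : R -> Prop) : has_lbound [set r : R | 2 <= r /\ P r].
  by exists 2 => r [].
apply: (inf_le_mulr_max _ (lb2 _) (colorable_ge2 noloop1) (lb2 _)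
                         (colorable_ge2 noloop2) (lb2 _)) => //.
move=> r1 r2 [r1_ge2 [f1 col1]] [_ [f2 col2]].
have : r1 <= Num.max r1 r2 by rewrite le_max lexx.
split; first lra.
by eexists; apply: prod_signed_circ_coloring col1 col2.
Qed.
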